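(* Let $\varphi(z_1,\dots,z_h)$ be a homogeneous cubic polynomial with real coefficients, and for $z\in\mathbb{C}^h$ let $\omega(z)=-\varphi(z)e_0+\sum_{i=1}^h\frac{\partial\varphi}{\partial z_i}e_i+\sum_{i=1}^hz_if_i+f_0$ in $\mathbb{C}^{2h+2}$ with real symplectic basis $e_0,\dots,e_h,f_1,\dots,f_h,f_0$. Define the filtration $F^3=\mathbb{C}\omega(z)$, $F^2=\operatorname{span}\{\omega,\partial\omega/\partial z_1,\dots,\partial\omega/\partial z_h\}$, $F^1=(F^3)^\perp$, $F^0=\mathbb{C}^{2h+2}$. Write $y=(\operatorname{Im}z_1,\dots,\operatorname{Im}z_h)\in\mathbb{R}^h$. Then the set of $z\in\mathbb{C}^h$ at which the Hodge–Riemann bilinear relations hold, namely $\sqrt{-1}\langle\omega,\bar\omega\rangle>0$ and the Hermitian form $\psi\mapsto\sqrt{-1}\langle\psi,\bar\psi\rangle$ is negative definite on $V^{2,1}=\{\psi\in F^2:\langle\psi,\bar\omega\rangle=0\}$, equals the set of $z$ such that $\varphi(y)<0$ and the real symmetric matrix $\bigl(\frac{\partial^2\varphi}{\partial z_i\partial z_j}(y)\bigr)$ has signature $(h-1,1)$ (i.e. $h-1$ positive and one negative eigenvalue).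
   Context: Symplectic basis: $\langle e_i,e_j\rangle=\langle f_i,f_j\rangle=0$, $\langle e_i,f_j\rangle=\delta_{ij}$; complex conjugation is with respect to the real structure in which all $e_i,f_i$ are real. *)

From HB Require Import structures.
From mathcomp Require Import all_boot all_order all_algebra.
Set Implicit Arguments. Unset Strict Implicit. Unset Printing Implicit Defensive.
Import Order.TTheory GRing.Theory Num.Theory.
Local Open Scope ring_scope.

(* A homogeneous cubic form in h variables is represented by its coefficient
   tensor c : phi(z) = sum_{i,j,k} c i j k * z_i z_j z_k (c need not be symmetric). *)
Definition cubic (C : numClosedFieldType) (h : nat)
  (c : 'I_h -> 'I_h -> 'I_h -> C) (z : 'rV[C]_h) : C :=
  \sum_(i < h) \sum_(j < h) \sum_(k < h) c i j k * z 0 i * z 0 j * z 0 k.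

Definition dcubic (C : numClosedFieldType) (h : nat)
  (c : 'I_h -> 'I_h -> 'I_h -> C) (z : 'rV[C]_h) (i : 'I_h) : C :=
  \sum_(j < h) \sum_(k < h) (c i j k + c j i k + c j k i) * z 0 j * z 0 k.

Definition d2cubic (C : numClosedFieldType) (h : nat)
  (c : 'I_h -> 'I_h -> 'I_h -> C) (z : 'rV[C]_h) (i j : 'I_h) : C :=
  \sum_(k < h) (c i j k + c i k j + c j i k + c k i j + c j k i + c k j i) * z 0 k.

Definition hessian (C : numClosedFieldType) (h : nat)
  (c : 'I_h -> 'I_h -> 'I_h -> C) (z : 'rV[C]_h) : 'M[C]_h :=
  \matrix_(i, j) d2cubic c z i j.

(* Vectors of C^{2h+2}: a 2 x (h+1) matrix; row 0 holds the coordinates on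
   e_0,...,e_h, row 1 the coordinates on f_0,...,f_h (column 0 = index 0). *)
Definition sympvec (C : numClosedFieldType) (h : nat) := 'M[C]_(2, h.+1).

(* symplectic form: <e_i,f_j> = delta_ij = - <f_j,e_i>, <e,e> = <f,f> = 0 *)
Definition sform (C : numClosedFieldType) (h : nat) (u v : sympvec C h) : C :=
  \sum_(i < h.+1) (u 0 i * v 1 i - u 1 i * v 0 i).

(* complex conjugation w.r.t. the real structure in which the e_i, f_i are real *)
Definition vconj (C : numClosedFieldType) (h : nat) (u : sympvec C h) : sympvec C h :=
  map_mx (fun x => x^*) u.

Definition omega (C : numClosedFieldType) (h : nat)
  (c : 'I_h -> 'I_h -> 'I_h -> C) (z : 'rV[C]_h) : sympvec C h :=
  \matrix_(r < 2, a < h.+1)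
    if r == 0 then
      (if unlift ord0 a is Some i then dcubic c z i else - cubic c z)
    else
      (if unlift ord0 a is Some i then z 0 i else 1).

Definition domega (C : numClosedFieldType) (h : nat)
  (c : 'I_h -> 'I_h -> 'I_h -> C) (z : 'rV[C]_h) (j : 'I_h) : sympvec C h :=
  \matrix_(r < 2, a < h.+1)
    if r == 0 then
      (if unlift ord0 a is Some i then d2cubic c z i j else - dcubic c z j)
    else
      (if unlift ord0 a is Some i then (i == j)%:R else 0).

Definition inF2 (C : numClosedFieldType) (h : nat)
  (c : 'I_h -> 'I_h -> 'I_h -> C) (z : 'rV[C]_h) (psi : sympvec C h) : Prop :=
  exists (a0 : C) (a : 'I_h -> C),
    psi = a0 *: omega c z + \sum_(j < h) a j *: domega c z j.

Definition HodgeRiemann (C : numClosedFieldType) (h : nat)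
  (c : 'I_h -> 'I_h -> 'I_h -> C) (z : 'rV[C]_h) : Prop :=
  0 < 'i * sform (omega c z) (vconj (omega c z)) /\
  (forall psi : sympvec C h, inF2 c z psi ->
     sform psi (vconj (omega c z)) = 0 -> psi != 0 ->
     'i * sform psi (vconj psi) < 0).

Definition signature (C : numClosedFieldType) (n : nat) (A : 'M[C]_n) (p q : nat) : Prop :=
  exists lam : 'I_n -> C,
    char_poly A = \prod_(i < n) ('X - (lam i)%:P) /\
    (forall i, lam i \is Num.real) /\
    #|[set i | 0 < lam i]| = p /\ #|[set i | lam i < 0]| = q.

Definition imvec (C : numClosedFieldType) (h : nat) (z : 'rV[C]_h) : 'rV[C]_h :=
  \row_i 'Im (z 0 i).

From HB Require Import structures.
From mathcomp Require Import all_boot all_order all_algebra.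
From mathcomp Require Import ring.
From Stdlib Require Import FunctionalExtensionality.
Import Order.TTheory GRing.Theory Num.Theory.
Set Implicit Arguments. Unset Strict Implicit.
Local Open Scope ring_scope.

(* Since
   the coefficients of phi are real, <psi, conj psi'> only depends on
   z - conj z = 2 i y, and is an explicit expression in phi(y), the gradient
   pairing dphi(y).a and the Hessian form H(y) at y (sform_f2vec_yvec).  The
   constraint <psi, conj omega> = 0 determines a0 from a, which reduces the
   relations to: phi(y) < 0, and H(y)(conj a, a) > |dphi(y).a|^2 / phi(y) for
   every a <> 0 (HodgeRiemann_reduce).

   By Euler's identities, phi(y) and dphi(y) are y H y / 6 and y H / 2.
   Diagonalising the real symmetric matrix H(y) by the spectral theorem turns
   the condition into a statement about a diagonal Hermitian form with real
   weights e and a vector eta with negative norm; splitting off the eta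
   direction and using Cauchy-Schwarz, it holds iff exactly one weight is
   negative and all others are positive, i.e. H(y) has signature (h-1, 1). *)

Section TrilinearForm.
Variables (C : numClosedFieldType) (h : nat) (c : 'I_h -> 'I_h -> 'I_h -> C).
Hypothesis c_real : forall i j k, c i j k \is Num.real.

Definition sum3 (F : 'I_h -> 'I_h -> 'I_h -> C) : C :=
  \sum_i \sum_j \sum_k F i j k.

Lemma eq_sum3 F G : (forall i j k, F i j k = G i j k) -> sum3 F = sum3 G.
Proof. by move=> FG; do 3![apply: eq_bigr => ? _]; apply: FG. Qed.

Lemma sum3_213 F : sum3 (fun i j k => F j i k) = sum3 F.
Proof. by rewrite /sum3 exchange_big. Qed.

Lemma sum3_132 F : sum3 (fun i j k => F i k j) = sum3 F.
Proof. by apply: eq_bigr => i _; rewrite exchange_big. Qed.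

Lemma sum3_231 F : sum3 (fun i j k => F j k i) = sum3 F.
Proof. by rewrite -[RHS]sum3_132 -[RHS]sum3_213. Qed.

Lemma sum3_312 F : sum3 (fun i j k => F k i j) = sum3 F.
Proof. by rewrite -[RHS]sum3_213 -[RHS]sum3_132. Qed.

Lemma sum3_321 F : sum3 (fun i j k => F k j i) = sum3 F.
Proof. by rewrite -[RHS]sum3_132 -[RHS]sum3_213 -[RHS]sum3_132. Qed.

Lemma sum3D F G : sum3 (fun i j k => F i j k + G i j k) = sum3 F + sum3 G.
Proof. by rewrite /sum3 -big_split; do 2![apply: eq_bigr => ? _; rewrite -big_split]. Qed.

Lemma sum3Z a F : sum3 (fun i j k => a * F i j k) = a * sum3 F.
Proof. by rewrite /sum3 mulr_sumr; do 2![apply: eq_bigr => ? _; rewrite mulr_sumr]. Qed.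

Definition tri (u v w : 'I_h -> C) : C :=
  sum3 (fun i j k => c i j k * u i * v j * w k).

Definition vadd (u v : 'I_h -> C) : 'I_h -> C := fun i => u i + v i.
Definition vscale (a : C) (u : 'I_h -> C) : 'I_h -> C := fun i => a * u i.
Definition vbar (u : 'I_h -> C) : 'I_h -> C := fun i => (u i)^*.

Lemma triDl u u' v w : tri (vadd u u') v w = tri u v w + tri u' v w.
Proof. by rewrite /tri -sum3D; apply: eq_sum3 => i j k; rewrite /vadd; ring. Qed.
Lemma triDm u v v' w : tri u (vadd v v') w = tri u v w + tri u v' w.
Proof. by rewrite /tri -sum3D; apply: eq_sum3 => i j k; rewrite /vadd; ring. Qed.
Lemma triDr u v w w' : tri u v (vadd w w') = tri u v w + tri u v w'.
Proof. by rewrite /tri -sum3D; apply: eq_sum3 => i j k; rewrite /vadd; ring. Qed.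
Lemma triZl a u v w : tri (vscale a u) v w = a * tri u v w.
Proof. by rewrite /tri -sum3Z; apply: eq_sum3 => i j k; rewrite /vscale; ring. Qed.
Lemma triZm a u v w : tri u (vscale a v) w = a * tri u v w.
Proof. by rewrite /tri -sum3Z; apply: eq_sum3 => i j k; rewrite /vscale; ring. Qed.
Lemma triZr a u v w : tri u v (vscale a w) = a * tri u v w.
Proof. by rewrite /tri -sum3Z; apply: eq_sum3 => i j k; rewrite /vscale; ring. Qed.

Lemma conj_tri u v w : (tri u v w)^* = tri (vbar u) (vbar v) (vbar w).
Proof.
rewrite /tri /sum3 rmorph_sum; apply: eq_bigr => i _; rewrite rmorph_sum.
apply: eq_bigr => j _; rewrite rmorph_sum; apply: eq_bigr => k _.
by rewrite !rmorphM /= (conj_Creal (c_real i j k)).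
Qed.

Lemma vbarD u v : vbar (vadd u v) = vadd (vbar u) (vbar v).
Proof. by apply: functional_extensionality => i; rewrite /vbar /vadd rmorphD. Qed.
Lemma vbarZ a u : vbar (vscale a u) = vscale a^* (vbar u).
Proof. by apply: functional_extensionality => i; rewrite /vbar /vscale rmorphM. Qed.
Lemma vbarK u : vbar (vbar u) = u.
Proof. by apply: functional_extensionality => i; rewrite /vbar conjCK. Qed.

Definition coords (z : 'rV[C]_h) : 'I_h -> C := fun i => z 0 i.

(* First polarization of tri: the derivative of x |-> tri x x x at z in
   direction u; and the second one, the Hessian pairing of b and a at z. *)
Definition dtri (z u : 'I_h -> C) : C := tri u z z + tri z u z + tri z z u.
Definition d2tri (z b a : 'I_h -> C) : C :=
  tri b a z + tri b z a + tri a b z + tri z b a + tri a z b + tri z a b.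

(* The derivatives dcubic and d2cubic, paired with vectors, are the
   polarizations of tri: each of their terms is a reindexed triple sum. *)
Lemma dcubic_dtri z b : \sum_i dcubic c z i * b i = dtri (coords z) b.
Proof.
have -> : \sum_i dcubic c z i * b i =
  sum3 (fun i j k => c i j k * z 0 j * z 0 k * b i + c j i k * z 0 j * z 0 k * b i
    + c j k i * z 0 j * z 0 k * b i).
  apply: eq_bigr => i _; rewrite /dcubic mulr_suml; apply: eq_bigr => j _.
  by rewrite mulr_suml; apply: eq_bigr => k _; ring.
rewrite !sum3D /dtri /tri; congr (_ + _ + _).
- by apply: eq_sum3 => i j k; rewrite /coords; ring.
- by rewrite -[RHS]sum3_213; apply: eq_sum3 => i j k; rewrite /coords; ring.
- by rewrite -[RHS]sum3_231; apply: eq_sum3 => i j k; rewrite /coords; ring.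
Qed.

Lemma d2cubic_d2tri z b a :
  \sum_i \sum_j b i * d2cubic c z i j * a j = d2tri (coords z) b a.
Proof.
have -> : \sum_i \sum_j b i * d2cubic c z i j * a j =
  sum3 (fun i j k => c i j k * b i * a j * z 0 k + c i k j * b i * a j * z 0 k
    + c j i k * b i * a j * z 0 k + c k i j * b i * a j * z 0 k
    + c j k i * b i * a j * z 0 k + c k j i * b i * a j * z 0 k).
  apply: eq_bigr => i _; apply: eq_bigr => j _; rewrite /d2cubic mulr_sumr mulr_suml.
  by apply: eq_bigr => k _; ring.
rewrite !sum3D /d2tri /tri; congr (_ + _ + _ + _ + _ + _);
  first [ by apply: eq_sum3 => i j k; rewrite /coords; ring
        | by rewrite -[RHS]sum3_132; apply: eq_sum3 => i j k; rewrite /coords; ring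
        | by rewrite -[RHS]sum3_213; apply: eq_sum3 => i j k; rewrite /coords; ring
        | by rewrite -[RHS]sum3_231; apply: eq_sum3 => i j k; rewrite /coords; ring
        | by rewrite -[RHS]sum3_312; apply: eq_sum3 => i j k; rewrite /coords; ring
        | by rewrite -[RHS]sum3_321; apply: eq_sum3 => i j k; rewrite /coords; ring ].
Qed.

End TrilinearForm.

Section PeriodVector.
Variables (C : numClosedFieldType) (h : nat) (c : 'I_h -> 'I_h -> 'I_h -> C).
Hypothesis c_real : forall i j k, c i j k \is Num.real.
Variable z : 'rV[C]_h.

Definition f2vec (a0 : C) (a : 'I_h -> C) : sympvec C h :=
  a0 *: omega c z + \sum_j a j *: domega c z j.

Lemma f2vecE a0 a r k :
  f2vec a0 a r k = a0 * omega c z r k + \sum_j a j * domega c z j r k.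
Proof. by rewrite !mxE summxE; congr (_ + _); apply: eq_bigr => j _; rewrite mxE. Qed.

Lemma f2vec_e0 a0 a :
  f2vec a0 a 0 ord0 = - a0 * cubic c z - \sum_j dcubic c z j * a j.
Proof.
rewrite f2vecE mxE eqxx unlift_none; congr (_ + _); first by ring.
by rewrite -sumrN; apply: eq_bigr => j _; rewrite mxE eqxx unlift_none; ring.
Qed.

Lemma f2vec_f0 a0 a : f2vec a0 a 1 ord0 = a0.
Proof.
rewrite f2vecE mxE /= unlift_none big1 ?mulr1 ?addr0 // => j _.
by rewrite mxE /= unlift_none mulr0.
Qed.

Lemma f2vec_e a0 a i : f2vec a0 a 0 (lift ord0 i) =
  a0 * dcubic c z i + \sum_j a j * d2cubic c z i j.
Proof.
rewrite f2vecE mxE eqxx liftK; congr (_ + _).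
by apply: eq_bigr => j _; rewrite mxE eqxx liftK.
Qed.

Lemma f2vec_f a0 a i : f2vec a0 a 1 (lift ord0 i) = a0 * z 0 i + a i.
Proof.
rewrite f2vecE mxE /= liftK; congr (_ + _).
rewrite (bigD1 i) //= mxE /= liftK eqxx mulr1 big1 ?addr0 // => j /negbTE ji.
by rewrite mxE /= liftK eq_sym ji mulr0.
Qed.

Definition epair (u v : sympvec C h) : C := \sum_k u 0 k * (v 1 k)^*.

Lemma sform_epair u v : sform u (vconj v) = epair u v - (epair v u)^*.
Proof.
rewrite /sform /epair rmorph_sum -sumrB; apply: eq_bigr => k _.
by rewrite !mxE rmorphM /= conjCK [_ * u 1 k]mulrC.
Qed.

Lemma epair_f2vec a0 a b0 b : epair (f2vec a0 a) (f2vec b0 b) =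
  (- a0 * tri c (coords z) (coords z) (coords z) - dtri c (coords z) a) * b0^*
  + a0 * dtri c (coords z) (vadd (vscale b0^* (vbar (coords z))) (vbar b))
  + d2tri c (coords z) (vadd (vscale b0^* (vbar (coords z))) (vbar b)) a.
Proof.
rewrite /epair big_ord_recl f2vec_e0 f2vec_f0 dcubic_dtri -addrA; congr (_ + _).
rewrite -dcubic_dtri -d2cubic_d2tri mulr_sumr -big_split; apply: eq_bigr => i _.
rewrite f2vec_e f2vec_f mulrDl mulr_suml /vadd /vscale /vbar /coords.
rewrite rmorphD rmorphM; congr (_ + _); first by ring.
by apply: eq_bigr => j _; ring.
Qed.

Definition zdiff : 'I_h -> C := vadd (coords z) (vscale (-1) (vbar (coords z))).

Lemma sform_f2vec a0 a b0 b :
  sform (f2vec a0 a) (vconj (f2vec b0 b)) =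
  - a0 * b0^* * tri c zdiff zdiff zdiff - (b0^* * dtri c zdiff a - a0 * dtri c zdiff (vbar b))
  + d2tri c zdiff (vbar b) a.
Proof.
rewrite sform_epair !epair_f2vec /dtri /d2tri /zdiff.
rewrite !(rmorphD, rmorphM, rmorphN, rmorphB) /=.
rewrite !(conjCK, conj_tri c_real, vbarD, vbarZ, vbarK).
rewrite !(triDl, triDm, triDr, triZl, triZm, triZr).
ring.
Qed.

End PeriodVector.

Definition nzvec (C : numClosedFieldType) (n : nat) (a : 'I_n -> C) : Prop :=
  exists i, a i != 0.

Section HodgeRiemannReduction.
Variables (C : numClosedFieldType) (h : nat) (c : 'I_h -> 'I_h -> 'I_h -> C).
Hypothesis c_real : forall i j k, c i j k \is Num.real.
Variable z : 'rV[C]_h.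

Let sqri : 'i * 'i = -1 :> C. Proof. by rewrite -expr2 sqrCi. Qed.

Definition yvec : 'I_h -> C := coords (imvec z).
Definition phiy : C := tri c yvec yvec yvec.
Definition grad (a : 'I_h -> C) : C := dtri c yvec a.
Definition hessq (a : 'I_h -> C) : C := d2tri c yvec (vbar a) a.

Lemma vbar_yvec : vbar yvec = yvec.
Proof.
apply: functional_extensionality => i; rewrite /vbar /yvec /coords mxE.
exact: conj_Creal (Creal_Im _).
Qed.

Lemma zdiff_yvec : zdiff z = vscale (2 * 'i) yvec.
Proof.
apply: functional_extensionality => i.
rewrite /zdiff /vadd /vscale /vbar /yvec /coords mxE ImE.
by field: sqri.
Qed.

(* The zero vector, written so that the scaling rules of tri apply to it. *)
Lemma zero_vec : (fun _ : 'I_h => 0 : C) = vscale 0 yvec.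
Proof. by apply: functional_extensionality => i; rewrite /vscale mul0r. Qed.

Lemma conj_phiy : phiy^* = phiy.
Proof. by rewrite /phiy (conj_tri c_real) vbar_yvec. Qed.

Lemma grad_vbar a : grad (vbar a) = (grad a)^*.
Proof. by rewrite /grad /dtri !rmorphD /= !(conj_tri c_real) vbar_yvec. Qed.

Lemma grad0 : grad (fun _ => 0) = 0.
Proof. by rewrite zero_vec /grad /dtri !(triZl, triZm, triZr) !mul0r !addr0. Qed.

Lemma sform_f2vec_yvec a0 a b0 b :
  sform (f2vec c z a0 a) (vconj (f2vec c z b0 b)) =
  8 * 'i * a0 * b0^* * phiy + 4 * (b0^* * grad a - a0 * grad (vbar b))
  + 2 * 'i * d2tri c yvec (vbar b) a.
Proof.
rewrite sform_f2vec // zdiff_yvec /grad /phiy /dtri /d2tri !(triZl, triZm, triZr).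
by ring: sqri.
Qed.

Lemma omega_f2vec : omega c z = f2vec c z 1 (fun _ => 0).
Proof. by rewrite /f2vec scale1r big1 ?addr0 // => j _; exact: scale0r. Qed.

(* Pairings with conj omega: the Hodge norm of omega, and the linear
   equation cutting V^{2,1} out of F^2. *)
Lemma sform_omega : sform (omega c z) (vconj (omega c z)) = 8 * 'i * phiy.
Proof.
rewrite omega_f2vec sform_f2vec_yvec conjC1 zero_vec /grad /dtri /d2tri vbarZ.
by rewrite !(triZl, triZm, triZr); ring.
Qed.

Lemma sform_f2vec_omega a0 a :
  sform (f2vec c z a0 a) (vconj (omega c z)) = 8 * 'i * a0 * phiy + 4 * grad a.
Proof.
rewrite omega_f2vec sform_f2vec_yvec conjC1 zero_vec /grad /dtri /d2tri vbarZ.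
by rewrite !(triZl, triZm, triZr); ring.
Qed.

Section NondegenerateCubic.
Hypothesis phiy_neq0 : phiy != 0.

(* The element of V^{2,1} lying over a: its omega-coefficient is forced. *)
Definition v21coef (a : 'I_h -> C) : C := 'i * grad a / (2 * phiy).

Lemma orth_omegaP a0 a :
  sform (f2vec c z a0 a) (vconj (omega c z)) = 0 <-> a0 = v21coef a.
Proof.
rewrite sform_f2vec_omega /v21coef; split => [e | ->]; last by field: sqri.
have -> : a0 = a0 + 'i / (8 * phiy) * (8 * 'i * a0 * phiy + 4 * grad a).
  by rewrite e mulr0 addr0.
by field: sqri.
Qed.

Lemma hodge_norm_v21 a :
  'i * sform (f2vec c z (v21coef a) a) (vconj (f2vec c z (v21coef a) a)) =
  2 * (grad a * (grad a)^* / phiy - hessq a).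
Proof.
have conj_coef : (v21coef a)^* = - 'i * (grad a)^* / (2 * phiy).
  by rewrite /v21coef !rmorphM /= conjCi fmorphV rmorphM /= conj_phiy conjC_nat.
rewrite sform_f2vec_yvec conj_coef grad_vbar /v21coef /hessq.
by field: sqri.
Qed.

End NondegenerateCubic.

(* The f-coordinates of f2vec a0 a are (a0, a0 z + a), so it vanishes only
   when a does. *)
Lemma f2vec_neq0 a0 a : nzvec a -> f2vec c z a0 a != 0.
Proof.
case=> i ai; apply/negP => /eqP e.
have e0 := congr1 (fun M : sympvec C h => M 1 ord0) e.
have ei := congr1 (fun M : sympvec C h => M 1 (lift ord0 i)) e.
rewrite /= f2vec_f0 mxE in e0; rewrite /= f2vec_f mxE e0 mul0r add0r in ei.
by rewrite ei eqxx in ai.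
Qed.

Theorem HodgeRiemann_reduce :
  HodgeRiemann c z <->
  (phiy < 0 /\ forall a, nzvec a -> grad a * (grad a)^* / phiy < hessq a).
Proof.
have omega_pos : (0 < 'i * sform (omega c z) (vconj (omega c z))) = (phiy < 0).
  rewrite sform_omega.
  have -> : 'i * (8 * 'i * phiy) = - (8 * phiy) by ring: sqri.
  by rewrite oppr_gt0 pmulr_rlt0 // ltr0n.
have norm_neg a : phiy != 0 ->
    ('i * sform (f2vec c z (v21coef a) a) (vconj (f2vec c z (v21coef a) a)) < 0)
    = (grad a * (grad a)^* / phiy < hessq a).
  by move=> phi0; rewrite hodge_norm_v21 // pmulr_rlt0 ?ltr0n // subr_lt0.
rewrite /HodgeRiemann omega_pos; split => -[phi_neg V21]; have phi0 := ltr0_neq0 phi_neg.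
  split => // a anz; rewrite -norm_neg //; apply: V21.
  - by exists (v21coef a), a.
  - exact/orth_omegaP.
  - exact: f2vec_neq0.
split => // _ [a0 [a ->]] /(orth_omegaP phi0 a0 a) -> psi_neq0.
have [anz | az] := boolP [exists i, a i != 0].
  by rewrite norm_neg //; apply: V21; apply/existsP.
have a_eq0 : a = (fun _ => 0).
  apply: functional_extensionality => i; apply/eqP.
  by move/existsPn: az => /(_ i); rewrite negbK.
move: psi_neq0; rewrite a_eq0 /v21coef grad0 mulr0 mul0r /f2vec scale0r add0r.
by rewrite big1 ?eqxx // => j _; exact: scale0r.
Qed.

End HodgeRiemannReduction.

Section RealSymmetricMatrix.
Variables (C : numClosedFieldType) (n : nat) (A : 'M[C]_n).
Hypothesis A_real : forall i j, A i j \is Num.real.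
Hypothesis A_sym : forall i j, A i j = A j i.

Lemma A_hermitian : A \is hermsymmx.
Proof.
apply/is_hermitianmxP; rewrite expr0 scale1r; apply/matrixP => i j.
by rewrite !mxE A_sym (conj_Creal (A_real _ _)).
Qed.

Definition eigU : 'M[C]_n := spectralmx A.
Definition eig (k : 'I_n) : C := spectral_diag A 0 k.

Lemma eig_real k : eig k \is Num.real.
Proof. by have /mxOverP := hermitian_spectral_diag_real A_hermitian; apply. Qed.

Lemma A_spectral : A = invmx eigU *m diag_mx (spectral_diag A) *m eigU.
Proof. exact/orthomx_spectralP/hermitian_normalmx/A_hermitian. Qed.

Lemma A_eigE i j : A i j = \sum_k (eigU k i)^* * eig k * eigU k j.
Proof.
rewrite {1}A_spectral invmx_unitary ?spectral_unitarymx // mul_mx_diag !mxE.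
by apply: eq_bigr => k _; rewrite !mxE.
Qed.

Lemma eigU_rows k l : \sum_j eigU k j * (eigU l j)^* = (k == l)%:R.
Proof.
have /unitarymxP/matrixP/(_ k l) := spectral_unitarymx A.
by rewrite !mxE => <-; apply: eq_bigr => j _; rewrite !mxE.
Qed.

Lemma eigU_cols j m : \sum_k (eigU k j)^* * eigU k m = (j == m)%:R.
Proof.
have := mulVmx (spectral_unit A).
rewrite invmx_unitary ?spectral_unitarymx // => /matrixP/(_ j m).
by rewrite !mxE => <-; apply: eq_bigr => k _; rewrite !mxE.
Qed.

Definition to_eig (a : 'I_n -> C) (k : 'I_n) : C := \sum_j eigU k j * a j.
Definition of_eig (w : 'I_n -> C) (j : 'I_n) : C := \sum_k (eigU k j)^* * w k.

Lemma sum_delta (f : 'I_n -> C) k : \sum_l f l * (k == l)%:R = f k.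
Proof.
rewrite (bigD1 k) //= eqxx mulr1 big1 ?addr0 // => l.
by rewrite eq_sym => /negbTE ->; rewrite mulr0.
Qed.

Lemma of_eigK w k : to_eig (of_eig w) k = w k.
Proof.
rewrite /to_eig /of_eig (eq_bigr (fun j => \sum_l eigU k j * ((eigU l j)^* * w l)));
  last by move=> j _; rewrite mulr_sumr.
rewrite exchange_big /= -[RHS](sum_delta w k); apply: eq_bigr => l _.
by rewrite -eigU_rows mulr_sumr; apply: eq_bigr => j _; ring.
Qed.

Lemma to_eigK a j : of_eig (to_eig a) j = a j.
Proof.
rewrite /to_eig /of_eig (eq_bigr (fun k => \sum_m (eigU k j)^* * (eigU k m * a m)));
  last by move=> k _; rewrite mulr_sumr.
rewrite exchange_big /= -[RHS](sum_delta a j); apply: eq_bigr => m _.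
by rewrite -eigU_cols mulr_sumr; apply: eq_bigr => k _; ring.
Qed.

Lemma to_eig_nz a : nzvec a -> nzvec (to_eig a).
Proof.
case=> i ai; have [/existsP // | /existsPn w0] := boolP [exists k, to_eig a k != 0].
move: ai; rewrite -(to_eigK a i) /of_eig big1 ?eqxx // => k _.
by have := w0 k; rewrite negbK => /eqP ->; rewrite mulr0.
Qed.

Lemma of_eig_nz w : nzvec w -> nzvec (of_eig w).
Proof.
case=> k wk; have [/existsP // | /existsPn a0] := boolP [exists j, of_eig w j != 0].
move: wk; rewrite -(of_eigK w k) /to_eig big1 ?eqxx // => j _.
by have := a0 j; rewrite negbK => /eqP ->; rewrite mulr0.
Qed.

Definition bform (b a : 'I_n -> C) : C := \sum_i \sum_j b i * A i j * a j.

Lemma bform_eig b a : bform b a = \sum_k eig k * (to_eig (vbar b) k)^* * to_eig a k.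
Proof.
rewrite /bform /to_eig.
transitivity (sum3 (fun i j k => b i * (eigU k i)^* * eig k * eigU k j * a j)).
  apply: eq_bigr => i _; apply: eq_bigr => j _; rewrite A_eigE mulr_sumr mulr_suml.
  by apply: eq_bigr => k _; ring.
rewrite -[LHS]sum3_231 /sum3; apply: eq_bigr => k _.
rewrite rmorph_sum -mulrA big_distrlr mulr_sumr; apply: eq_bigr => i _.
rewrite mulr_sumr; apply: eq_bigr => j _.
by rewrite /vbar /= rmorphM /= conjCK; ring.
Qed.

(* A is similar to diag(eig), whose characteristic polynomial is read off
   its diagonal. *)
Lemma char_poly_eig : char_poly A = \prod_(i < n) ('X - (eig i)%:P).
Proof.
have -> : char_poly A = char_poly (diag_mx (spectral_diag A)).
  rewrite /char_poly {1}A_spectral /char_poly_mx.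
  have U_unit : eigU \in unitmx := spectral_unit A.
  have UVU : map_mx polyC (invmx eigU) *m map_mx polyC eigU = 1%:M.
    by rewrite -map_mxM mulVmx // map_mx1.
  have X_conj : ('X%:M : 'M[{poly C}]_n) =
      map_mx polyC (invmx eigU) *m 'X%:M *m map_mx polyC eigU.
    by rewrite mul_mx_scalar -scalemxAl UVU scalemx1.
  rewrite !map_mxM {1}X_conj -mulmxBl -mulmxBr !det_mulmx mulrAC -det_mulmx UVU.
  by rewrite det1 mul1r.
rewrite char_poly_trig ?diag_mx_is_trig //; apply: eq_bigr => i _.
by rewrite mxE eqxx mulr1n.
Qed.

(* The signature of A counts the signs of eig, which list the roots of the
   characteristic polynomial with multiplicity. *)
Lemma signature_eig p q : signature A p q <->
  (#|[set i | 0 < eig i]| = p /\ #|[set i | eig i < 0]| = q).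
Proof.
split=> [[lam [lam_char [_ [<- <-]]]] | [pos neg]]; last first.
  by exists eig; do 2?split => //; [exact: char_poly_eig | exact: eig_real].
have lam_eig : perm_eq (map lam (index_enum 'I_n)) (map eig (index_enum 'I_n)).
  by apply: prod_XsubC_eq; rewrite !big_map -lam_char -char_poly_eig.
have card_sign (P : pred C) (f : 'I_n -> C) :
    #|[set i | P (f i)]| = \sum_(x <- map f (index_enum 'I_n) | P x) 1%N.
  by rewrite big_map sum1dep_card.
by split; [pose P := (fun x : C => 0 < x) | pose P := (fun x : C => x < 0)];
  rewrite -[LHS]/#|[set i | P (eig i)]| -[RHS]/#|[set i | P (lam i)]|
    !card_sign (perm_big _ lam_eig).
Qed.

End RealSymmetricMatrix.

Lemma cauchy_schwarz (C : numClosedFieldType) (n : nat) (P : pred 'I_n)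
    (f v u : 'I_n -> C) : (forall k, P k -> 0 <= f k) ->
  (\sum_(k | P k) f k * (u k)^* * v k) * (\sum_(k | P k) f k * (u k)^* * v k)^*
  <= (\sum_(k | P k) f k * (v k)^* * v k) * (\sum_(k | P k) f k * (u k)^* * u k).
Proof.
move=> f_ge0; set X := \sum_(k | P k) f k * (u k)^* * v k.
set a := \sum_(k | P k) f k * (v k)^* * v k.
set b := \sum_(k | P k) f k * (u k)^* * u k.
have conjX : X^* = \sum_(k | P k) f k * u k * (v k)^*.
  rewrite /X rmorph_sum; apply: eq_bigr => k Pk.
  by rewrite !rmorphM /= conjCK (conj_Creal (ger0_real (f_ge0 k Pk))).
pose Q k l := f k * (v k)^* * v k * (f l * (u l)^* * u l)
            - f k * (u k)^* * v k * (f l * u l * (v l)^*).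
(* Lagrange's identity: 2 (a b - |X|^2) is a sum of nonnegative terms. *)
have lagrange : \sum_(k | P k) \sum_(l | P l)
      f k * f l * ((v k * u l - v l * u k) * (v k * u l - v l * u k)^*)
    = 2 * (a * b - X * X^*).
  transitivity (\sum_(k | P k) \sum_(l | P l) (Q k l + Q l k)).
    apply: eq_bigr => k _; apply: eq_bigr => l _.
    by rewrite /Q !(rmorphB, rmorphM) /=; ring.
  have sumQ : \sum_(k | P k) \sum_(l | P l) Q k l = a * b - X * X^*.
    rewrite conjX /a /b /X !big_distrlr -sumrB; apply: eq_bigr => k _.
    by rewrite -sumrB.
  rewrite (eq_bigr (fun k => \sum_(l | P l) Q k l + \sum_(l | P l) Q l k));
    last by move=> k _; rewrite big_split.
  by rewrite big_split /= [X in _ + X = _]exchange_big /= sumQ; ring.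
have : 0 <= 2 * (a * b - X * X^*).
  rewrite -lagrange; apply: sumr_ge0 => k Pk; apply: sumr_ge0 => l Pl.
  by apply: mulr_ge0; [apply: mulr_ge0; exact: f_ge0 | exact: mul_conjC_ge0].
by rewrite pmulr_rge0 ?ltr0n // subr_ge0.
Qed.

(* |x|^2, written conj(x) x as in the diagonal forms below. *)
Lemma conjC_mul_ge0 (C : numClosedFieldType) (x : C) : 0 <= x^* * x.
Proof. by rewrite mulrC mul_conjC_ge0. Qed.

Section DiagonalHermitianForm.
Variables (C : numClosedFieldType) (n : nat) (e eta : 'I_n -> C).
Hypothesis e_real : forall k, e k \is Num.real.

Definition hform (w : 'I_n -> C) : C := \sum_k e k * (w k)^* * w k.
Definition hpair (w : 'I_n -> C) : C := \sum_k e k * (eta k)^* * w k.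

Lemma hform_real w : hform w \is Num.real.
Proof.
apply: rpred_sum => k _; rewrite -mulrA; apply: realM; first exact: e_real.
exact/ger0_real/conjC_mul_ge0.
Qed.

Lemma hpair_shift v t : hpair (fun k => v k + t * eta k) = hpair v + t * hform eta.
Proof. by rewrite /hpair /hform mulr_sumr -big_split; apply: eq_bigr => k _ /=; ring. Qed.

Lemma hform_shift v t : hform (fun k => v k + t * eta k) =
  hform v + t * (hpair v)^* + t^* * hpair v + t * t^* * hform eta.
Proof.
rewrite /hpair /hform rmorph_sum !mulr_sumr -!big_split; apply: eq_bigr => k _ /=.
by rewrite !(rmorphD, rmorphM) /= conjCK (conj_Creal (e_real k)); ring.
Qed.

Lemma sum_two (F : 'I_n -> C) k l : k != l ->
  (forall m, m != k -> m != l -> F m = 0) -> \sum_m F m = F k + F l.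
Proof.
move=> kl F0; rewrite (bigD1 k) //= (bigD1 l) /=; last by rewrite eq_sym.
by rewrite big1 ?addr0 // => m /andP [mk ml]; exact: F0.
Qed.

Section NegativeOnEta.
Hypothesis eta_neg : hform eta < 0.

Definition posdef_perp : Prop := forall v, nzvec v -> hpair v = 0 -> 0 < hform v.

(* On each coordinate plane there is a nonzero vector orthogonal to eta; so
   if hform is positive definite on the orthogonal of eta, at most one weight
   can be nonpositive. *)
Lemma nonpos_weight_unique : posdef_perp -> forall k l, e k <= 0 -> e l <= 0 -> k = l.
Proof.
move=> pos k l ek el; apply/eqP/negPn/negP => kl.
pose be := e k * (eta k)^*; pose al := e l * (eta l)^*.
pose s := if be == 0 then 1 else al.
pose w m := if m == k then s else if m == l then - be else 0.
have [wk wl] : w k = s /\ w l = - be by rewrite /w eqxx eq_sym (negbTE kl) eqxx.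
have w0 m : m != k -> m != l -> w m = 0 by rewrite /w => /negbTE -> /negbTE ->.
have w_nz : nzvec w.
  rewrite /nzvec; have [be0 | be0] := eqVneq be 0.
    by exists k; rewrite wk /s be0 eqxx oner_neq0.
  by exists l; rewrite wl oppr_eq0.
have w_perp : hpair w = 0.
  rewrite /hpair (sum_two kl); last by move=> m mk ml; rewrite w0 // mulr0.
  by rewrite wk wl /s -/be -/al; case: eqP => [-> | _]; ring.
have : hform w <= 0.
  rewrite /hform (sum_two kl); last by move=> m mk ml; rewrite w0 // mulr0.
  by rewrite -!mulrA -[0](addr0 0) lerD // mulr_le0_ge0 // conjC_mul_ge0.
by rewrite real_leNgt ?hform_real ?real0 // pos.
Qed.

(* Conversely, when e has exactly one negative weight the positive part
   controls the pairing with eta by Cauchy-Schwarz. *)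
Lemma posdef_perp_of_one_negative m :
  e m < 0 -> (forall k, k != m -> 0 < e k) -> posdef_perp.
Proof.
move=> em e_pos v [k vk] v_perp.
have e_ge0 j : j != m -> 0 <= e j by move=> jm; exact/ltW/e_pos.
set a := \sum_(j | j != m) e j * (v j)^* * v j.
set b := \sum_(j | j != m) e j * (eta j)^* * eta j.
set X := \sum_(j | j != m) e j * (eta j)^* * v j.
have hform_v : hform v = e m * (v m)^* * v m + a by rewrite /hform (bigD1 m).
have hform_eta : hform eta = e m * (eta m)^* * eta m + b by rewrite /hform (bigD1 m).
have XE : X = - (e m * (eta m)^* * v m).
  by apply/eqP; rewrite -addr_eq0 addrC -v_perp /hpair (bigD1 m).
have [vm | vm] := eqVneq (v m) 0.
  have km : k != m by apply/eqP => km; rewrite km vm eqxx in vk.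
  rewrite hform_v vm conjC0 !mulr0 add0r /a (bigD1 k) //= ltr_pwDl //.
    by rewrite -mulrA mulr_gt0 ?e_pos // mulrC mul_conjC_gt0.
  by apply: sumr_ge0 => j /andP [jm _]; rewrite -mulrA mulr_ge0 ?e_ge0 ?conjC_mul_ge0.
(* If hform v <= 0, then with q = -e_m |v_m|^2 and r = -e_m |eta_m|^2 we get
   |X|^2 = q r, a <= q and b < r, contradicting |X|^2 <= a b. *)
rewrite real_ltNge ?hform_real ?real0 //; apply/negP => v_nonpos.
set q := - (e m * (v m)^* * v m).
set r := - (e m * (eta m)^* * eta m).
have a_le_q : a <= q by rewrite /q -subr_le0 opprK addrC -hform_v.
have q_pos : 0 < q.
  by rewrite /q -mulrA -mulNr mulr_gt0 ?oppr_gt0 // mulrC mul_conjC_gt0.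
have b_lt_r : b < r by rewrite /r -subr_lt0 opprK addrC -hform_eta.
have b_ge0 : 0 <= b.
  by apply: sumr_ge0 => j jm; rewrite -mulrA mulr_ge0 ?e_ge0 ?conjC_mul_ge0.
have XX : X * X^* = q * r.
  by rewrite XE /q /r !(rmorphN, rmorphM) /= conjCK (conj_Creal (e_real m)); ring.
have cs := @cauchy_schwarz C n (fun j => j != m) e v eta e_ge0.
rewrite -/a -/b -/X XX in cs.
have qb_lt : q * b < q * r by rewrite ltr_pM2l.
have := le_lt_trans (le_trans cs (ler_wpM2r b_ge0 a_le_q)) qb_lt.
by rewrite ltxx.
Qed.

Lemma posdef_perp_iff :
  posdef_perp <-> exists m, e m < 0 /\ forall k, k != m -> 0 < e k.
Proof.
split=> [pos | [m [em e_pos]]]; last exact: posdef_perp_of_one_negative em e_pos.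
have [m em] : exists m, e m < 0.
  have [/existsP // | /existsPn e_nneg] := boolP [exists m, e m < 0].
  suff : 0 <= hform eta by rewrite real_leNgt ?hform_real ?real0 // eta_neg.
  apply: sumr_ge0 => k _; rewrite -mulrA mulr_ge0 ?conjC_mul_ge0 //.
  by rewrite real_leNgt ?real0 ?e_real.
exists m; split => // k km; rewrite real_ltNge ?real0 ?e_real //.
by apply/negP => ek; move: km; rewrite (nonpos_weight_unique pos ek (ltW em)) eqxx.
Qed.

(* The form whose positivity is the reduced Hodge-Riemann condition
   hform w > 3 |hpair w|^2 / (2 hform eta). *)
Definition gform (w : 'I_n -> C) : C :=
  3 * (hpair w * (hpair w)^*) - 2 * (hform w * hform eta).

(* Writing w = v + t eta with v orthogonal to eta,
   gform w = |t|^2 hform(eta)^2 - 2 hform(eta) hform(v). *)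
Lemma gform_posdef_iff : (forall w, nzvec w -> 0 < gform w) <-> posdef_perp.
Proof.
have S_neq0 := ltr0_neq0 eta_neg.
have m2S_pos : 0 < - 2 * hform eta by rewrite mulNr oppr_gt0 pmulr_rlt0 ?ltr0n.
split=> [G_pos v vnz v_perp | pos w [k wk]].
  have := G_pos v vnz; rewrite /gform v_perp mul0r mulr0 sub0r oppr_gt0.
  by rewrite pmulr_rlt0 ?ltr0n // nmulr_llt0.
set t := hpair w / hform eta.
pose v k := w k - t * eta k.
have wE : w = (fun k => v k + t * eta k).
  by apply: functional_extensionality => j; rewrite /v subrK.
have hpair_w : hpair w = hpair v + t * hform eta by rewrite {1}wE hpair_shift.
have v_perp : hpair v = 0.
  by apply: (addIr (t * hform eta)); rewrite -hpair_w add0r /t mulfVK.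
have hform_w : hform w = hform v + t * t^* * hform eta.
  by rewrite {1}wE hform_shift v_perp conjC0 !mulr0 !addr0.
have gE : gform w = t * t^* * (hform eta * hform eta) + - 2 * hform eta * hform v.
  rewrite /gform hform_w hpair_w v_perp add0r.
  by rewrite rmorphM /= (conj_Creal (hform_real eta)); ring.
have tt_ge0 : 0 <= t * t^* * (hform eta * hform eta).
  by rewrite mulr_ge0 ?mul_conjC_ge0 // ltW // nmulr_rgt0.
rewrite gE; have [/existsP vnz | /existsPn vz] := boolP [exists j, v j != 0].
  by rewrite addrC ltr_pwDl // mulr_gt0 // pos.
have v0 j : v j = 0 by apply/eqP; move: (vz j); rewrite negbK.
have hform_v : hform v = 0 by rewrite /hform big1 // => j _; rewrite v0 mulr0.
have t_neq0 : t != 0 by apply: contraNneq wk; rewrite wE /= v0 => ->; rewrite mul0r addr0.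
by rewrite hform_v mulr0 addr0 mulr_gt0 ?mul_conjC_gt0 // nmulr_rgt0.
Qed.

End NegativeOnEta.

Lemma one_negative_card :
  (exists m, e m < 0 /\ forall k, k != m -> 0 < e k) <->
  (#|[set k | 0 < e k]| = n.-1 /\ #|[set k | e k < 0]| = 1%N).
Proof.
split=> [[m [em e_pos]] | [card_pos /eqP/cards1P [m neg_m]]].
  have neg_m : [set k | e k < 0] = [set m].
    apply/setP => k; rewrite !inE; apply/idP/eqP => [ek | -> //].
    by apply/eqP; apply: contraTT ek => km; rewrite lt_gtF ?e_pos.
  have pos_m : [set k | 0 < e k] = [set~ m].
    apply/setP => k; rewrite !inE; apply/idP/idP => [ek | /e_pos //].
    by apply: contraTneq ek => ->; rewrite (lt_gtF em).
  by rewrite neg_m pos_m cardsC1 cards1 card_ord.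
have em : e m < 0 by have := set11 m; rewrite -neg_m inE.
exists m; split => // k km.
have pos_m : [set k | 0 < e k] = [set~ m].
  apply/eqP; rewrite eqEcard cardsC1 card_ord card_pos leqnn andbT.
  by apply/subsetP => j; rewrite !inE; apply: contraTneq => ->; rewrite (lt_gtF em).
have : k \in [set~ m] by rewrite in_setC1.
by rewrite -pos_m inE.
Qed.

End DiagonalHermitianForm.

Lemma reduced_ineqE (C : numClosedFieldType) (B F S : C) : S < 0 ->
  (B / 2 * (B / 2)^* / (S / 6) < F) = (0 < 3 * (B * B^*) - 2 * (F * S)).
Proof.
move=> S_neg; have S_neq0 := ltr0_neq0 S_neg.
have -> : B / 2 * (B / 2)^* / (S / 6) = 3 * (B * B^*) / (2 * S).
  by rewrite rmorphM fmorphV /= conjC_nat; field; rewrite S_neq0.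
rewrite ltr_ndivrMr ?pmulr_rlt0 ?ltr0n // subr_gt0.
by congr (_ < _); ring.
Qed.

Section HessianAtImaginaryPart.
Variables (C : numClosedFieldType) (h : nat) (c : 'I_h -> 'I_h -> 'I_h -> C).
Hypothesis c_real : forall i j k, c i j k \is Num.real.
Variable z : 'rV[C]_h.

Let A := hessian c (imvec z).
Let y := yvec z.

Lemma hessian_real i j : A i j \is Num.real.
Proof.
rewrite /A /hessian mxE /d2cubic; apply: rpred_sum => k _; apply: realM.
  by rewrite !realD ?c_real.
by rewrite mxE Creal_Im.
Qed.

Lemma hessian_sym i j : A i j = A j i.
Proof. by rewrite /A /hessian !mxE /d2cubic; apply: eq_bigr => k _; ring. Qed.

Lemma bform_hessian b a : bform A b a = d2tri c y b a.
Proof.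
rewrite -d2cubic_d2tri /bform; apply: eq_bigr => i _; apply: eq_bigr => j _.
by rewrite /A /hessian mxE.
Qed.

(* Euler's identities for the cubic: phi(y) = (y H y)/6, dphi(y).a = (y H a)/2. *)
Lemma phiy_hessian : phiy c z = bform A y y / 6.
Proof. by rewrite bform_hessian /phiy /d2tri; field. Qed.

Lemma grad_hessian a : grad c z a = bform A y a / 2.
Proof. by rewrite bform_hessian /grad /dtri /d2tri; field. Qed.

Let e := eig A.
Let eta := to_eig A y.

Lemma hessq_eig a : hessq c z a = hform e (to_eig A a).
Proof. by rewrite /hessq -bform_hessian (bform_eig hessian_real hessian_sym) vbarK. Qed.

Lemma bform_y_eig a : bform A y a = hpair e eta (to_eig A a).
Proof. by rewrite (bform_eig hessian_real hessian_sym) vbar_yvec. Qed.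

Lemma phiy_eig : phiy c z = hform e eta / 6.
Proof. by rewrite phiy_hessian bform_y_eig. Qed.

Lemma hodge_ineq_gform a : hform e eta < 0 ->
  (grad c z a * (grad c z a)^* / phiy c z < hessq c z a) = (0 < gform e eta (to_eig A a)).
Proof.
by move=> S_neg; rewrite grad_hessian phiy_eig hessq_eig bform_y_eig reduced_ineqE.
Qed.

Lemma hodge_ineq_signature : hform e eta < 0 ->
  (forall a, nzvec a -> grad c z a * (grad c z a)^* / phiy c z < hessq c z a) <->
  signature A h.-1 1.
Proof.
move=> S_neg; apply: (iff_trans _ (iff_sym (signature_eig hessian_real hessian_sym _ _))).
apply: (iff_trans _ (one_negative_card e)).
apply: (iff_trans _ (posdef_perp_iff (eig_real hessian_real hessian_sym) S_neg)).
apply: (iff_trans _ (gform_posdef_iff (eig_real hessian_real hessian_sym) S_neg)).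
split=> [pos w w_nz | pos a a_nz].
  have -> : w = to_eig A (of_eig A w).
    by apply: functional_extensionality => k; rewrite of_eigK.
  by rewrite -hodge_ineq_gform //; apply/pos/of_eig_nz.
by rewrite hodge_ineq_gform //; apply/pos/to_eig_nz.
Qed.

End HessianAtImaginaryPart.

Theorem mainTheorem14 (C : numClosedFieldType) (h : nat)
  (c : 'I_h -> 'I_h -> 'I_h -> C)
  (c_real : forall i j k, c i j k \is Num.real) (z : 'rV[C]_h) :
  HodgeRiemann c z <->
  (cubic c (imvec z) < 0 /\ signature (hessian c (imvec z)) h.-1 1).
Proof.
(* Reduce to phi(y) and the Hessian form; phi(y) < 0 says that y has negative
   norm for the Hessian, and then the second condition is the signature. *)
rewrite (HodgeRiemann_reduce c_real z); change (cubic c (imvec z)) with (phiy c z).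
have phiy_neg : (phiy c z < 0) =
    (hform (eig (hessian c (imvec z))) (to_eig (hessian c (imvec z)) (yvec z)) < 0).
  by rewrite (phiy_eig c_real) pmulr_llt0 // invr_gt0 ltr0n.
rewrite phiy_neg; split=> -[S_neg cond]; split => //.
all: exact/(hodge_ineq_signature c_real).
Qed.
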